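(* Let $D_\sigma>0$, $k_\mathrm{d}\ge0$, $r_{\mathrm{R}}>0$, $r_{\mathrm{T}}>0$, $r_0>r_{\mathrm{T}}+r_{\mathrm{R}}$ and $w_\mathrm{e}>0$. For $r>r_{\mathrm{R}}$ let $$h_\mathrm{p}(t,r)=\frac{r_{\mathrm{R}}w_\mathrm{e}}{r}\left[\frac{1}{\sqrt{\pi D_\sigma t}}\exp\Big(-\frac{(r-r_{\mathrm{R}})^2}{4D_\sigma t}-k_\mathrm{d}t\Big)-\gamma(w_\mathrm{e})\exp\big(\gamma(w_\mathrm{e})(r-r_{\mathrm{R}})+\zeta(w_\mathrm{e})t\big)\mathrm{erfc}\Big(\frac{r-r_{\mathrm{R}}}{\sqrt{4D_\sigma t}}+\gamma(w_\mathrm{e})\sqrt{D_\sigma t}\Big)\right],$$ and define $$h_\mathrm{s}(t)=\frac{1}{2r_{\mathrm{T}}}\int_{-r_{\mathrm{T}}}^{r_{\mathrm{T}}}h_\mathrm{p}\Big(t,\sqrt{r_{\mathrm{T}}^2+r_0^2-2r_0x}\Big)\,\mathrm{d}x.$$ Then $$h_\mathrm{s}(t)=\frac{r_{\mathrm{R}}w_\mathrm{e}}{2r_{\mathrm{T}}r_0}\big[\xi_1(t,r_0-r_{\mathrm{T}}-r_{\mathrm{R}})-\xi_1(t,r_0+r_{\mathrm{T}}-r_{\mathrm{R}})\big],$$ where $\xi_1(t,z)=\exp\big(\gamma(w_\mathrm{e})z+\zeta(w_\mathrm{e})t\big)\,\mathrm{erfc}\Big(\varpi(w_\mathrm{e})\sqrt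 t+\frac{z}{\sqrt{4D_\sigma t}}\Big)$.
   Context: Notation: $\gamma(w)=\frac{wr_{\mathrm{R}}+D_\sigma}{D_\sigma r_{\mathrm{R}}}$, $\zeta(w)=\gamma(w)^2D_\sigma-k_\mathrm{d}$, $\varpi(w)=\gamma(w)\sqrt{D_\sigma}$. $h_\mathrm{p}(t,r)$ is the expected hitting rate at the (homogenized) receiver of radius $r_{\mathrm{R}}$ with effective reaction rate $w_\mathrm{e}$ for a point release at distance $r$ from its center; $h_\mathrm{s}(t)$ is the hitting rate when molecules are released uniformly at time 0 from a sphere of radius $r_{\mathrm{T}}$ whose center lies at distance $r_0$ from the receiver center. *)

From Stdlib Require Import Reals.
From Coquelicot Require Import Coquelicot.
Open Scope R_scope.

Definition erf (x : R) : R := 2 / sqrt PI * RInt (fun u => exp (- u ^ 2)) 0 x.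
Definition erfc (x : R) : R := 1 - erf x.

Definition gam (Ds rR w : R) : R := (w * rR + Ds) / (Ds * rR).
Definition zeta (Ds kd rR w : R) : R := (gam Ds rR w) ^ 2 * Ds - kd.
Definition varpi (Ds rR w : R) : R := gam Ds rR w * sqrt Ds.

Definition h_p (Ds kd rR we t r : R) : R :=
  rR * we / r *
  (1 / sqrt (PI * Ds * t) * exp (- (r - rR) ^ 2 / (4 * Ds * t) - kd * t)
   - gam Ds rR we * exp (gam Ds rR we * (r - rR) + zeta Ds kd rR we * t)
     * erfc ((r - rR) / sqrt (4 * Ds * t) + gam Ds rR we * sqrt (Ds * t))).

(* hitting rate for uniform release from a sphere of radius rT at distance r0 *)
Definition h_s (Ds kd rR rT r0 we t : R) : R :=
  1 / (2 * rT) *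
  RInt (fun x => h_p Ds kd rR we t (sqrt (rT ^ 2 + r0 ^ 2 - 2 * r0 * x))) (- rT) rT.

Definition xi1 (Ds kd rR we t z : R) : R :=
  exp (gam Ds rR we * z + zeta Ds kd rR we * t)
  * erfc (varpi Ds rR we * sqrt t + z / sqrt (4 * Ds * t)).

From Stdlib Require Import Reals Lra.
From Coquelicot Require Import Coquelicot.
Open Scope R_scope.

(* With z = r - rR, the bracket in h_p is exactly -d/dz xi1(t, z): differentiating
   the erfc factor of xi1 produces a Gaussian which, because zeta = gam^2 Ds - kd,
   combines with the exponential prefactor into the first term of h_p.  On the
   sphere, r(x) = sqrt (rT^2 + r0^2 - 2 r0 x) satisfies r r' = -r0, so the 1/r in h_p
   cancels and h_p(t, r(x)) = (rR we / r0) d/dx xi1(t, r(x) - rR).  The fundamental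
   theorem of calculus then evaluates h_s from r(rT) = r0 - rT and r(-rT) = r0 + rT. *)

Lemma is_derive_erfc (x : R) : is_derive erfc x (- (2 / sqrt PI * exp (- x ^ 2))).
Proof.
  assert (Hcont : forall y, continuous (fun u => exp (- (u * (u * 1)))) y).
  { intros y. apply (ex_derive_continuous (K:=R_AbsRing) (V:=R_NormedModule)).
    auto_derive. auto. }
  unfold erfc, erf. auto_derive.
  - split; [| split; [| auto]].
    + apply (ex_RInt_continuous (V:=R_CompleteNormedModule)). intros z _. apply Hcont.
    + exists (mkposreal 1 Rlt_0_1). intros y _.
      apply continuity_pt_filterlim, Hcont.
  - simpl. ring.
Qed.

Lemma exp_shift_gaussian (g q k z : R) : 0 < q ->
  exp (g * z + (g ^ 2 * q ^ 2 - k)) * exp (- (g * q + z / (2 * q)) ^ 2)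
  = exp (- z ^ 2 / (4 * q ^ 2) - k).
Proof. intros Hq. rewrite <- exp_plus. f_equal. field. lra. Qed.

Lemma sqrt_mult3 (x y z : R) : 0 <= x -> 0 <= y * z ->
  sqrt (x * y * z) = sqrt x * sqrt (y * z).
Proof. intros Hx Hyz. rewrite Rmult_assoc. now apply sqrt_mult. Qed.

Lemma is_derive_xi1 (Ds kd rR we t z : R) : 0 < Ds -> 0 < t ->
  is_derive (xi1 Ds kd rR we t) z
    (- (1 / sqrt (PI * Ds * t) * exp (- z ^ 2 / (4 * Ds * t) - kd * t)
        - gam Ds rR we * exp (gam Ds rR we * z + zeta Ds kd rR we * t)
          * erfc (z / sqrt (4 * Ds * t) + gam Ds rR we * sqrt (Ds * t)))).
Proof.
  intros HD Ht.
  set (g := gam Ds rR we). set (q := sqrt (Ds * t)).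
  assert (Hq : 0 < q) by (apply sqrt_lt_R0; nra).
  assert (Hq2 : q ^ 2 = Ds * t) by (apply pow2_sqrt; nra).
  assert (Hpi : 0 < sqrt PI) by (apply sqrt_lt_R0, PI_RGT_0).
  assert (H4 : sqrt (4 * Ds * t) = 2 * q).
  { rewrite sqrt_mult3 by nra.
    replace 4 with (2 ^ 2) by ring. rewrite sqrt_pow2; [fold q; ring | lra]. }
  assert (HPI : sqrt (PI * Ds * t) = sqrt PI * q)
    by (apply sqrt_mult3; [left; apply PI_RGT_0 | nra]).
  assert (Hc : zeta Ds kd rR we * t = g ^ 2 * q ^ 2 - kd * t)
    by (unfold zeta; fold g; rewrite Hq2; ring).
  assert (Hvarpi : varpi Ds rR we * sqrt t = g * q)
    by (unfold varpi, q; fold g; rewrite sqrt_mult by lra; ring).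
  unfold xi1. rewrite Hvarpi, H4, HPI, Hc.
  replace (4 * Ds * t) with (4 * q ^ 2) by (rewrite Hq2; ring).
  rewrite <- (exp_shift_gaussian g q (kd * t) z Hq).
  auto_derive.
  - eexists; apply is_derive_erfc.
  - rewrite (is_derive_unique (fun x => erfc x) _ _ (is_derive_erfc _)).
    change (gam Ds rR we) with g. rewrite (Rplus_comm (z / (2 * q))). unfold Rdiv.
    set (E := erfc _). set (A := exp (g * z + _)). set (B := exp (- _)).
    field. lra.
Qed.

Lemma is_derive_xi1_radius (Ds kd rR we t a r0 x : R) :
  0 < Ds -> 0 < t -> r0 <> 0 -> 0 < a - 2 * r0 * x ->
  is_derive (fun x => rR * we / r0 * xi1 Ds kd rR we t (sqrt (a - 2 * r0 * x) - rR)) x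
    (h_p Ds kd rR we t (sqrt (a - 2 * r0 * x))).
Proof.
  intros HD Ht Hr0 Hpos.
  assert (Hr : 0 < sqrt (a - 2 * r0 * x)) by now apply sqrt_lt_R0.
  assert (Hpi : 0 < sqrt (PI * Ds * t)).
  { apply sqrt_lt_R0, Rmult_lt_0_compat; [| exact Ht].
    apply Rmult_lt_0_compat; [apply PI_RGT_0 | exact HD]. }
  assert (Hradius : is_derive (fun x => sqrt (a - 2 * r0 * x) - rR) x
                      (- r0 / sqrt (a - 2 * r0 * x))).
  { auto_derive; unfold Rminus in *; [lra | field; lra]. }
  pose proof (is_derive_scal _ _ (rR * we / r0) _
    (is_derive_comp _ _ _ _ _ (is_derive_xi1 Ds kd rR we t _ HD Ht) Hradius)) as Hchain.
  match type of Hchain with is_derive _ _ ?d =>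
    replace (h_p Ds kd rR we t (sqrt (a - 2 * r0 * x))) with d; [exact Hchain |] end.
  unfold h_p, scal; simpl; unfold mult; simpl. field. repeat split; lra.
Qed.

Lemma continuous_h_p (Ds kd rR we t r : R) : 0 < Ds -> 0 < t -> 0 < r ->
  continuous (h_p Ds kd rR we t) r.
Proof.
  intros HD Ht Hr.
  apply (ex_derive_continuous (K:=R_AbsRing) (V:=R_NormedModule)).
  unfold h_p. auto_derive.
  repeat split; try lra; eexists; apply is_derive_erfc.
Qed.

Theorem lemma2 (Ds kd rR rT r0 we t : R) :
  0 < Ds -> 0 <= kd -> 0 < rR -> 0 < rT -> rT + rR < r0 -> 0 < we -> 0 < t ->
  h_s Ds kd rR rT r0 we t =
  rR * we / (2 * rT * r0) *
  (xi1 Ds kd rR we t (r0 - rT - rR) - xi1 Ds kd rR we t (r0 + rT - rR)).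
Proof.
  intros HD _ HrR HrT Hr0 Hwe Ht.
  set (a := rT ^ 2 + r0 ^ 2).
  set (F := fun x => rR * we / r0 * xi1 Ds kd rR we t (sqrt (a - 2 * r0 * x) - rR)).
  assert (Hpos : forall x, Rmin (- rT) rT <= x <= Rmax (- rT) rT -> 0 < a - 2 * r0 * x).
  { intros x Hx. rewrite Rmin_left, Rmax_right in Hx by lra. unfold a. nra. }
  assert (HI : is_RInt (fun x => h_p Ds kd rR we t (sqrt (a - 2 * r0 * x))) (- rT) rT
                 (minus (F rT) (F (- rT)))).
  { apply (is_RInt_derive (V:=R_CompleteNormedModule)); intros x Hx.
    - apply is_derive_xi1_radius; auto; lra.
    - apply (continuous_comp (fun x => sqrt (a - 2 * r0 * x))).
      + apply continuous_sqrt_comp.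
        apply (ex_derive_continuous (K:=R_AbsRing) (V:=R_NormedModule)). auto_derive. auto.
      + apply continuous_h_p; auto. now apply sqrt_lt_R0, Hpos. }
  unfold h_s. fold a. rewrite (is_RInt_unique _ _ _ _ HI).
  unfold F, minus, plus, opp; simpl.
  replace (a - 2 * r0 * rT) with ((r0 - rT) ^ 2) by (unfold a; ring).
  replace (a - 2 * r0 * - rT) with ((r0 + rT) ^ 2) by (unfold a; ring).
  rewrite !sqrt_pow2 by lra.
  field. lra.
Qed.
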